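(* For $\varepsilon\in[0,1]$, let $C(\varepsilon)$ be the infimum of the Chernoff information $C(P,Q)$ over all pairs of probability distributions $P,Q$ (on a common countable set) with $d_{\mathrm{TV}}(P,Q)=\varepsilon$. Then this infimum is attained (it is a minimum) and $$C(\varepsilon)=\begin{cases}-\tfrac12\log(1-\varepsilon^2), & \varepsilon\in[0,1),\\ +\infty, & \varepsilon=1.\end{cases}$$ For $\varepsilon\in[0,1)$ the minimum is achieved by the 2-element distributions $P=\left(\frac{1-\varepsilon}{2},\frac{1+\varepsilon}{2}\right)$, $Q=\left(\frac{1+\varepsilon}{2},\frac{1-\varepsilon}{2}\right)$.
   Context: For probability distributions $P,Q$ on a common countable set: the total variation distance is $d_{\mathrm{TV}}(P,Q)=\frac12\sum_x |P(x)-Q(x)|$, and the Chernoff information is $C(P,Q)=-\min_{\lambda\in[0,1]}\log\left(\sum_x P(x)^{\lambda}Q(x)^{1-\lambda}\right)$ (with $\log 0=-\infty$, so $C(P,Q)$ may be $+\infty$). Logarithms are natural. *)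

From Stdlib Require Import Reals Lra.
Open Scope R_scope.

(* Distributions on the countable set nat (any countable set embeds in nat;
   extending by zeros changes neither d_TV nor the Chernoff information). *)
Definition is_distr (P : nat -> R) : Prop :=
  (forall n, 0 <= P n) /\ infinite_sum P 1.

(* d_TV(P,Q) = e, i.e. (1/2) * sum_x |P x - Q x| = e. *)
Definition tv_dist_is (P Q : nat -> R) (e : R) : Prop :=
  infinite_sum (fun n => Rabs (P n - Q n)) (2 * e).

(* x^y for x >= 0, y in [0,1], with the convention 0^0 = 1 and 0^y = 0 for y > 0. *)
Definition rpow0 (x y : R) : R :=
  if Rle_dec x 0 then (if Req_EM_T y 0 then 1 else 0) else Rpower x y.

Definition bhat_is (P Q : nat -> R) (lam s : R) : Prop :=
  infinite_sum (fun n => rpow0 (P n) lam * rpow0 (Q n) (1 - lam)) s.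

Definition bhat_inf_is (P Q : nat -> R) (m : R) : Prop :=
  (forall lam s, 0 <= lam <= 1 -> bhat_is P Q lam s -> m <= s) /\
  (forall m', (forall lam s, 0 <= lam <= 1 -> bhat_is P Q lam s -> m' <= s) -> m' <= m).

(* Extended nonnegative reals: None stands for +infinity. *)
Definition ext_le (a b : option R) : Prop :=
  match a, b with
  | _, None => True
  | None, Some _ => False
  | Some x, Some y => x <= y
  end.

(* C(P,Q) = c, where c = None means C(P,Q) = +infinity (log 0 = -infinity). *)
Definition chernoff_is (P Q : nat -> R) (c : option R) : Prop :=
  exists m, bhat_inf_is P Q m /\
    ((0 < m /\ c = Some (- ln m)) \/ (m = 0 /\ c = None)).

Definition C_eps (eps : R) : option R :=
  if Rlt_dec eps 1 then Some (- (1/2) * ln (1 - eps ^ 2)) else None.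

Definition P_eps (eps : R) (n : nat) : R :=
  match n with 0%nat => (1 - eps) / 2 | 1%nat => (1 + eps) / 2 | _ => 0 end.
Definition Q_eps (eps : R) (n : nat) : R :=
  match n with 0%nat => (1 + eps) / 2 | 1%nat => (1 - eps) / 2 | _ => 0 end.

(* The lower bound is Le Cam's inequality B^2 + eps^2 <= 1 for the
   Bhattacharyya coefficient B = sum_x sqrt (P x Q x), the value of the
   Chernoff sum at lam = 1/2; the infimum over lam is at most B.  The
   inequality comes from summing the perfect squares
   (t |sqrt p - sqrt q| - (sqrt p + sqrt q))^2 >= 0, which yields a quadratic
   in t that is nonnegative everywhere, and reading off its discriminant.
   For the swapped 2-point pair (a, b), (b, a) the two summands of the
   Chernoff sum have product a b for every lam, so AM-GM shows that lam = 1/2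
   is optimal, with value 2 sqrt (a b) = sqrt (1 - eps^2). *)

From Stdlib Require Import Reals Lra Psatz Lia.
Open Scope R_scope.

Lemma infinite_sum_ext f g l :
  (forall n, f n = g n) -> infinite_sum f l -> infinite_sum g l.
Proof.
  intros E H e He. destruct (H e He) as [N HN]. exists N. intros n Hn.
  rewrite <- (sum_eq f g n) by (intros; apply E). now apply HN.
Qed.

Lemma infinite_sum_plus f g a b : infinite_sum f a -> infinite_sum g b ->
  infinite_sum (fun n => f n + g n) (a + b).
Proof.
  intros Hf Hg e He. destruct (CV_plus _ _ _ _ Hf Hg e He) as [N HN].
  exists N. intros n Hn. rewrite sum_plus. now apply HN.
Qed.

Lemma infinite_sum_scal c f a :
  infinite_sum f a -> infinite_sum (fun n => c * f n) (c * a).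
Proof.
  intros Hf.
  assert (Hc : Un_cv (fun _ : nat => c) c).
  { intros e He. exists 0%nat. intros. unfold R_dist. rewrite Rminus_diag, Rabs_R0. lra. }
  intros e He. destruct (CV_mult _ _ _ _ Hc Hf e He) as [N HN]. exists N. intros n Hn.
  replace (sum_f_R0 (fun n => c * f n) n) with (c * sum_f_R0 f n).
  - now apply HN.
  - rewrite scal_sum. apply sum_eq. intros; ring.
Qed.

Lemma infinite_sum_le f g a b : (forall n, f n <= g n) ->
  infinite_sum f a -> infinite_sum g b -> a <= b.
Proof.
  intros Hfg Hf Hg. eapply Rle_cv_lim; [|exact Hf|exact Hg].
  intros N. apply sum_Rle. intros n _. apply Hfg.
Qed.

Lemma infinite_sum_nonneg f a : (forall n, 0 <= f n) -> infinite_sum f a -> 0 <= a.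
Proof.
  intros Hf Ha. apply (infinite_sum_le (fun _ => 0) f); auto.
  intros e He. exists 0%nat. intros n _. unfold R_dist.
  rewrite sum_cte, Rmult_0_l, Rminus_diag, Rabs_R0. lra.
Qed.

Lemma infinite_sum_two_point f : (forall n, (2 <= n)%nat -> f n = 0) ->
  infinite_sum f (f 0%nat + f 1%nat).
Proof.
  intros Hz.
  assert (Hpart : forall k, sum_f_R0 f (S k) = f 0%nat + f 1%nat).
  { induction k as [|k IH]; [reflexivity|].
    simpl sum_f_R0 in *. rewrite IH, (Hz (S (S k))) by lia. ring. }
  intros e He. exists 1%nat. intros [|k] Hk; [lia|]. rewrite Hpart.
  unfold R_dist. rewrite Rminus_diag, Rabs_R0. lra.
Qed.

Lemma rpow0_ge0 x y : 0 <= rpow0 x y.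
Proof.
  unfold rpow0. destruct (Rle_dec x 0); [destruct (Req_EM_T y 0); lra|].
  left; apply exp_pos.
Qed.

Lemma rpow0_half x : 0 <= x -> rpow0 x (1/2) = sqrt x.
Proof.
  intros Hx. unfold rpow0. destruct (Rle_dec x 0).
  - replace x with 0 by lra. rewrite sqrt_0. destruct (Req_EM_T (1/2) 0); lra.
  - replace (1/2) with (/2) by field. apply Rpower_sqrt. lra.
Qed.

Lemma rpow0_half_conj x y : 0 <= x -> 0 <= y ->
  rpow0 x (1/2) * rpow0 y (1 - 1/2) = sqrt x * sqrt y.
Proof.
  intros Hx Hy. replace (1 - 1/2) with (1/2) by field. now rewrite !rpow0_half.
Qed.

Lemma rpow0_0_conj lam : rpow0 0 lam * rpow0 0 (1 - lam) = 0.
Proof.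
  unfold rpow0. destruct (Rle_dec 0 0); [|lra].
  destruct (Req_EM_T lam 0), (Req_EM_T (1 - lam) 0); lra.
Qed.

Lemma rpow0_mul_conj x lam : 0 < x -> rpow0 x lam * rpow0 x (1 - lam) = x.
Proof.
  intros Hx. unfold rpow0. destruct (Rle_dec x 0); [lra|].
  rewrite <- Rpower_plus. replace (lam + (1 - lam)) with 1 by ring. now apply Rpower_1.
Qed.

Lemma bhat_term_ge0 (P Q : nat -> R) (lam : R) (n : nat) :
  0 <= rpow0 (P n) lam * rpow0 (Q n) (1 - lam).
Proof. apply Rmult_le_pos; apply rpow0_ge0. Qed.

Lemma bhat_inf_exists P Q lam0 s0 : 0 <= lam0 <= 1 -> bhat_is P Q lam0 s0 ->
  exists m, bhat_inf_is P Q m /\ 0 <= m.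
Proof.
  intros Hlam0 Hs0.
  set (E := fun x => exists lam s, 0 <= lam <= 1 /\ bhat_is P Q lam s /\ x = - s).
  assert (HE0 : forall x, E x -> x <= 0).
  { intros x [lam [s [_ [Hs ->]]]].
    pose proof (infinite_sum_nonneg _ _ (bhat_term_ge0 P Q lam) Hs). lra. }
  assert (HE : E (- s0)) by (exists lam0, s0; auto).
  destruct (completeness E (ex_intro _ 0 HE0) (ex_intro _ _ HE)) as [l [Hub Hlub]].
  exists (- l). split; [split|].
  - intros lam s Hlam Hs. assert (- s <= l) by (apply Hub; exists lam, s; auto). lra.
  - intros m' Hm'. enough (l <= - m') by lra.
    apply Hlub. intros x [lam [s [Hlam [Hs ->]]]]. specialize (Hm' lam s Hlam Hs). lra.
  - enough (l <= 0) by lra. apply Hlub. exact HE0.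
Qed.

Lemma bhattacharyya_exists P Q : is_distr P -> is_distr Q ->
  exists B, bhat_is P Q (1/2) B /\ 0 <= B /\ B <= 1.
Proof.
  intros [HP0 HP] [HQ0 HQ].
  set (g := fun n => sqrt (P n) * sqrt (Q n)).
  assert (Hg0 : forall n, 0 <= g n) by (intros; apply Rmult_le_pos; apply sqrt_pos).
  assert (Hg_amgm : forall n, g n <= / 2 * (P n + Q n)).
  { intros n. unfold g. pose proof (sqrt_sqrt _ (HP0 n)). pose proof (sqrt_sqrt _ (HQ0 n)).
    pose proof (Rle_0_sqr (sqrt (P n) - sqrt (Q n))). unfold Rsqr in *. nra. }
  assert (Hmean := infinite_sum_scal (/ 2) _ _ (infinite_sum_plus _ _ _ _ HP HQ)).
  destruct (Rseries_CV_comp g (fun n => / 2 * (P n + Q n))) as [B HB].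
  { intros n. split; auto. }
  { eexists. exact Hmean. }
  exists B. split; [|split].
  - apply (infinite_sum_ext g); [|exact HB].
    intros n. symmetry. now apply rpow0_half_conj.
  - exact (infinite_sum_nonneg _ _ Hg0 HB).
  - pose proof (infinite_sum_le _ _ _ _ Hg_amgm HB Hmean). lra.
Qed.

Lemma discriminant_le a b c : 0 <= a ->
  (forall t, 0 <= a * t * t - 2 * b * t + c) -> b * b <= a * c.
Proof.
  intros Ha Hq. destruct (Rle_lt_or_eq_dec 0 a Ha) as [Hpos|<-].
  - specialize (Hq (b / a)).
    replace (a * (b / a) * (b / a) - 2 * b * (b / a) + c) with ((a * c - b * b) / a)
      in Hq by (field; lra).
    assert (0 <= (a * c - b * b) / a * a) by (apply Rmult_le_pos; lra).
    replace ((a * c - b * b) / a * a) with (a * c - b * b) in H by (field; lra). lra.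
  - destruct (Req_dec b 0) as [->|Hb]; [lra|].
    specialize (Hq ((c + 1) / (2 * b))).
    replace (0 * ((c + 1) / (2 * b)) * ((c + 1) / (2 * b)) - 2 * b * ((c + 1) / (2 * b)) + c)
      with (-1) in Hq by (field; lra). lra.
Qed.

(* [2 t |x^2 - y^2|] is the cross term of the square (t |x - y| - (x + y))^2. *)
Lemma le_cam_term x y t : 0 <= x -> 0 <= y ->
  2 * t * Rabs (x * x - y * y) <= t * t * ((x - y) * (x - y)) + (x + y) * (x + y).
Proof.
  intros Hx Hy. destruct (Rle_dec x y).
  - rewrite Rabs_left1 by nra. pose proof (Rle_0_sqr (t * (y - x) - (x + y))).
    unfold Rsqr in *. nra.
  - rewrite Rabs_right by nra. pose proof (Rle_0_sqr (t * (x - y) - (x + y))).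
    unfold Rsqr in *. nra.
Qed.

Lemma le_cam_inequality P Q eps B : is_distr P -> is_distr Q -> tv_dist_is P Q eps ->
  bhat_is P Q (1/2) B -> B <= 1 -> B * B <= 1 - eps ^ 2.
Proof.
  intros [HP0 HP] [HQ0 HQ] Htv HB HB1.
  assert (HBsqrt : infinite_sum (fun n => sqrt (P n) * sqrt (Q n)) B).
  { apply (infinite_sum_ext (fun n => rpow0 (P n) (1/2) * rpow0 (Q n) (1 - 1/2)));
      [|exact HB].
    intros n. now apply rpow0_half_conj. }
  enough (eps * eps <= (1 - B) * (1 + B)) by (simpl; nra).
  apply discriminant_le; [lra|]. intros t.
  pose proof (infinite_sum_plus _ _ _ _
    (infinite_sum_plus _ _ _ _
      (infinite_sum_plus _ _ _ _ (infinite_sum_scal (t * t + 1) _ _ HP)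
         (infinite_sum_scal (t * t + 1) _ _ HQ))
      (infinite_sum_scal (2 - 2 * (t * t)) _ _ HBsqrt))
    (infinite_sum_scal (-2 * t) _ _ Htv)) as Hsum.
  enough (0 <= (t * t + 1) * 1 + (t * t + 1) * 1 + (2 - 2 * (t * t)) * B + -2 * t * (2 * eps))
    by lra.
  refine (infinite_sum_nonneg _ _ _ Hsum). intros n. simpl.
  pose proof (le_cam_term (sqrt (P n)) (sqrt (Q n)) t (sqrt_pos _) (sqrt_pos _)) as Hterm.
  pose proof (sqrt_sqrt _ (HP0 n)). pose proof (sqrt_sqrt _ (HQ0 n)).
  rewrite !sqrt_sqrt in Hterm by auto. nra.
Qed.

Lemma bhat_inf_sq_le P Q eps : is_distr P -> is_distr Q -> tv_dist_is P Q eps ->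
  exists m, bhat_inf_is P Q m /\ 0 <= m /\ m * m <= 1 - eps ^ 2.
Proof.
  intros HP HQ Htv.
  destruct (bhattacharyya_exists P Q HP HQ) as [B [HB [HB0 HB1]]].
  destruct (bhat_inf_exists P Q (1/2) B ltac:(lra) HB) as [m [Hm Hm0]].
  assert (HmB : m <= B) by exact (proj1 Hm (1/2) B ltac:(lra) HB).
  pose proof (le_cam_inequality P Q eps B HP HQ Htv HB HB1).
  exists m. split; [exact Hm|split; [exact Hm0|nra]].
Qed.

Lemma chernoff_ge_C_eps P Q eps : 0 <= eps <= 1 ->
  is_distr P -> is_distr Q -> tv_dist_is P Q eps ->
  exists c, chernoff_is P Q c /\ ext_le (C_eps eps) c.
Proof.
  intros Heps HP HQ Htv.
  destruct (bhat_inf_sq_le P Q eps HP HQ Htv) as [m [Hm [Hm0 Hmm]]].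
  destruct (Rle_lt_or_eq_dec 0 m Hm0) as [Hpos|<-].
  - exists (Some (- ln m)). split; [exists m; auto|].
    unfold C_eps. destruct (Rlt_dec eps 1) as [Hlt|Hge]; cbn [ext_le].
    + assert (Hln : ln (m * m) <= ln (1 - eps ^ 2)).
      { destruct (Rle_lt_or_eq_dec _ _ Hmm) as [Hlt'|Heq].
        - left; apply ln_increasing; nra.
        - rewrite Heq; lra. }
      rewrite ln_mult in Hln by lra. lra.
    + replace eps with 1 in Hmm by lra. simpl in Hmm. nra.
  - exists None. split; [exists 0; auto|]. now destruct (C_eps eps).
Qed.

Definition two_point (a b : R) (n : nat) : R :=
  match n with 0%nat => a | 1%nat => b | _ => 0 end.

Lemma P_eps_two_point eps : P_eps eps = two_point ((1 - eps) / 2) ((1 + eps) / 2).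
Proof. reflexivity. Qed.

Lemma Q_eps_two_point eps : Q_eps eps = two_point ((1 + eps) / 2) ((1 - eps) / 2).
Proof. reflexivity. Qed.

Lemma two_point_distr a b : 0 <= a -> 0 <= b -> a + b = 1 -> is_distr (two_point a b).
Proof.
  intros Ha Hb Hab. split; [intros [|[|n]]; simpl; lra|].
  rewrite <- Hab. apply (infinite_sum_two_point (two_point a b)).
  intros [|[|n]] Hn; [lia|lia|reflexivity].
Qed.

Lemma two_point_tv a b c d e : Rabs (a - c) + Rabs (b - d) = 2 * e ->
  tv_dist_is (two_point a b) (two_point c d) e.
Proof.
  intros He. unfold tv_dist_is. rewrite <- He.
  apply (infinite_sum_two_point (fun n => Rabs (two_point a b n - two_point c d n))).
  intros [|[|n]] Hn; [lia|lia|]. simpl. rewrite Rminus_diag. apply Rabs_R0.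
Qed.

Lemma bhat_two_point a b c d lam : bhat_is (two_point a b) (two_point c d) lam
  (rpow0 a lam * rpow0 c (1 - lam) + rpow0 b lam * rpow0 d (1 - lam)).
Proof.
  apply (infinite_sum_two_point
           (fun n => rpow0 (two_point a b n) lam * rpow0 (two_point c d n) (1 - lam))).
  intros [|[|n]] Hn; [lia|lia|]. apply rpow0_0_conj.
Qed.

Lemma amgm_sqrt u v : 0 <= u -> 0 <= v -> 2 * sqrt (u * v) <= u + v.
Proof.
  intros Hu Hv. rewrite sqrt_mult by auto.
  pose proof (sqrt_sqrt _ Hu). pose proof (sqrt_sqrt _ Hv).
  pose proof (Rle_0_sqr (sqrt u - sqrt v)). unfold Rsqr in *. nra.
Qed.

Lemma bhat_inf_two_point_swap a b : 0 < a -> 0 < b ->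
  bhat_inf_is (two_point a b) (two_point b a) (2 * sqrt (a * b)).
Proof.
  intros Ha Hb. split.
  - intros lam s _ Hs.
    rewrite (uniqueness_sum _ _ _ Hs (bhat_two_point a b b a lam)).
    replace (a * b) with ((rpow0 a lam * rpow0 b (1 - lam)) * (rpow0 b lam * rpow0 a (1 - lam))).
    + apply amgm_sqrt; apply Rmult_le_pos; apply rpow0_ge0.
    + rewrite <- (rpow0_mul_conj a lam Ha), <- (rpow0_mul_conj b lam Hb) at 3. ring.
  - intros m' Hm'. apply (Hm' (1/2)); [lra|].
    replace (2 * sqrt (a * b))
      with (rpow0 a (1/2) * rpow0 b (1 - 1/2) + rpow0 b (1/2) * rpow0 a (1 - 1/2)).
    + apply bhat_two_point.
    + rewrite !rpow0_half_conj, sqrt_mult by lra. ring.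
Qed.

Lemma two_point_eps_distr eps : 0 <= eps <= 1 ->
  is_distr (P_eps eps) /\ is_distr (Q_eps eps) /\ tv_dist_is (P_eps eps) (Q_eps eps) eps.
Proof.
  intros Heps. rewrite P_eps_two_point, Q_eps_two_point.
  split; [|split]; try (apply two_point_distr; lra).
  apply two_point_tv. rewrite Rabs_left1, Rabs_right by lra. field.
Qed.

Lemma chernoff_two_point_eps eps : 0 <= eps < 1 ->
  chernoff_is (P_eps eps) (Q_eps eps) (C_eps eps).
Proof.
  intros Heps.
  assert (Hm : 2 * sqrt ((1 - eps) / 2 * ((1 + eps) / 2)) = sqrt (1 - eps ^ 2)).
  { replace ((1 - eps) / 2 * ((1 + eps) / 2)) with (/ 4 * (1 - eps ^ 2)) by field.
    rewrite sqrt_mult by (simpl; nra). replace (/ 4) with (/ 2 * / 2) by field.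
    rewrite sqrt_mult by lra. rewrite sqrt_sqrt by lra. field. }
  assert (Hpos : 0 < 1 - eps ^ 2) by (simpl; nra).
  exists (sqrt (1 - eps ^ 2)). split.
  - rewrite P_eps_two_point, Q_eps_two_point, <- Hm. apply bhat_inf_two_point_swap; lra.
  - left. split; [now apply sqrt_lt_R0|].
    unfold C_eps. destruct (Rlt_dec eps 1); [|lra]. f_equal.
    assert (Hsq : ln (1 - eps ^ 2) = 2 * ln (sqrt (1 - eps ^ 2))).
    { rewrite <- (sqrt_sqrt (1 - eps ^ 2)) at 1 by lra.
      rewrite ln_mult by (apply sqrt_lt_R0; lra). ring. }
    rewrite Hsq. field.
Qed.

Lemma chernoff_two_point_one : chernoff_is (P_eps 1) (Q_eps 1) None.
Proof.
  destruct (two_point_eps_distr 1 ltac:(lra)) as [HP [HQ Htv]].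
  destruct (bhat_inf_sq_le _ _ 1 HP HQ Htv) as [m [Hm [Hm0 Hmm]]].
  exists m. split; [exact Hm|]. right. split; [simpl in Hmm; nra | reflexivity].
Qed.

Theorem proposition2 (eps : R) (Heps : 0 <= eps <= 1) :
  (forall P Q : nat -> R, is_distr P -> is_distr Q -> tv_dist_is P Q eps ->
     exists c, chernoff_is P Q c /\ ext_le (C_eps eps) c) /\
  (exists P Q : nat -> R, is_distr P /\ is_distr Q /\ tv_dist_is P Q eps /\
     chernoff_is P Q (C_eps eps)) /\
  (eps < 1 ->
     is_distr (P_eps eps) /\ is_distr (Q_eps eps) /\
     tv_dist_is (P_eps eps) (Q_eps eps) eps /\
     chernoff_is (P_eps eps) (Q_eps eps) (C_eps eps)).
Proof.
  assert (Hwitness : is_distr (P_eps eps) /\ is_distr (Q_eps eps) /\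
                     tv_dist_is (P_eps eps) (Q_eps eps) eps /\
                     chernoff_is (P_eps eps) (Q_eps eps) (C_eps eps)).
  { destruct (two_point_eps_distr eps Heps) as [HP [HQ Htv]].
    split; [exact HP|split; [exact HQ|split; [exact Htv|]]].
    destruct (Rlt_dec eps 1) as [Hlt|Hge].
    - apply chernoff_two_point_eps; lra.
    - replace eps with 1 by lra. unfold C_eps.
      destruct (Rlt_dec 1 1); [lra|]. apply chernoff_two_point_one. }
  split; [|split].
  - intros P Q. now apply chernoff_ge_C_eps.
  - exists (P_eps eps), (Q_eps eps). exact Hwitness.
  - intros _. exact Hwitness.
Qed.
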